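(* Let $A=(A,m,1,\Delta,\varepsilon,S)$ be a Hopf algebra over a field $k$. Then the category $\mathcal{CB}(A)$ of Hopf braces on $A$ is equivalent to the category $\mathcal{C}(A)$ of bijective 1-cocycles with domain $A$.
   Context: All objects are over a field $k$; Sweedler notation $\Delta(a)=a_1\otimes a_2$, $\Delta'(a)=a_{1'}\otimes a_{2'}$, left coactions $\rho(a)=a_{(-1)}\otimes a_{(0)}$. A Hopf brace $(A,\Delta,\Delta')$ consists of an algebra $(A,m,1)$ with two Hopf algebra structures $(A,m,1,\Delta,\varepsilon,S)$ and $(A,m,1,\Delta',\epsilon,T)$ such that for all $h$: $h_{1'}\otimes h_{2'1}\otimes h_{2'2}=h_{11'}S(h_2)h_{31'}\otimes h_{12'}\otimes h_{32'}$ (here $h_{31'}$ means $\Delta'$ applied to $h_3$, etc.). A morphism of Hopf braces $f:(H,\Delta,\Delta')\to(G,\Delta,\Delta')$ is a linear map that is a Hopf algebra homomorphism both for the first structures and for the second structures. $\mathcal{CB}(A)$ is the full subcategory of Hopf braces whose objects are Hopf braces $(A,\Delta,\Delta')$ whose first Hopf algebra structure is the given one $(A,m,1,\Delta,\varepsilon,S)$. Given Hopf algebras $H$ and $A$ with $A$ a left $H$-comodule coalgebra (a left $H$-comodule with $a_{(-1)}\otimes a_{(0)1}\otimes a_{(0)2}=a_{1(-1)}a_{2(-1)}\otimes a_{1(0)}\otimes a_{2(0)}$ and $a_{(-1)}\varepsilon(a_{(0)})=\varepsilon(a)1_H$), a bijective 1-cocycle is an algebra isomorphism $\pi:A\to H$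 such that $\pi(a)_1\otimes\pi(a)_2=\pi(a_1)a_{2(-1)}\otimes\pi(a_{2(0)})$ for all $a\in A$ (the comodule coalgebra structure is part of the data). A morphism from a bijective 1-cocycle $\eta:B\to K$ to a bijective 1-cocycle $\pi:A\to H$ is a pair $(f,g)$ of Hopf algebra maps $f:K\to H$, $g:B\to A$ with $\pi g=f\eta$ and $g(b)_{(-1)}\otimes g(b)_{(0)}=f(b_{(-1)})\otimes g(b_{(0)})$ for all $b\in B$. $\mathcal{C}(A)$ is the full subcategory of bijective 1-cocycles whose objects are the bijective 1-cocycles $\pi:A\to H$ with domain the fixed Hopf algebra $A$. *)

From HB Require Import structures.
From mathcomp Require Import all_boot all_algebra.
From Stdlib Require Import ProofIrrelevance.

Set Implicit Arguments.
Unset Strict Implicit.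
Unset Printing Implicit Defensive.

Import GRing.Theory.
Local Open Scope ring_scope.

Record category := Category {
  cob :> Type;
  chom : cob -> cob -> Type;
  cid : forall x, chom x x;
  ccomp : forall x y z, chom y z -> chom x y -> chom x z;
  ccomp_id_l : forall x y (f : chom x y), ccomp (cid y) f = f;
  ccomp_id_r : forall x y (f : chom x y), ccomp f (cid x) = f;
  ccomp_assoc : forall x y z w (f : chom z w) (g : chom y z) (h : chom x y),
      ccomp f (ccomp g h) = ccomp (ccomp f g) h }.
Arguments cid {c} x.
Arguments ccomp {c x y z}.

Record functor (C D : category) := Functor {
  fobj :> C -> D;
  fmap : forall x y, chom x y -> chom (fobj x) (fobj y);
  fmap_id : forall x, fmap (cid x) = cid (fobj x);
  fmap_comp : forall x y z (f : chom y z) (g : chom x y),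
      fmap (ccomp f g) = ccomp (fmap f) (fmap g) }.
Arguments fmap {C D} _ {x y}.

Definition id_functor (C : category) : functor C C :=
  @Functor C C (fun x => x) (fun x y f => f) (fun x => erefl) (fun x y z f g => erefl).

Definition comp_functor (C D E : category) (G : functor D E) (F : functor C D)
  : functor C E.
Proof.
refine (@Functor C E (fun x => G (F x)) (fun x y f => fmap G (fmap F f)) _ _).
- by move=> x; rewrite !fmap_id.
- by move=> x y z f g; rewrite !fmap_comp.
Defined.

Definition is_iso (C : category) (x y : C) (f : chom x y) :=
  exists g : chom y x, ccomp g f = cid x /\ ccomp f g = cid y.

Definition nat_iso (C D : category) (F G : functor C D) :=
  exists eta : forall x : C, chom (F x) (G x),
    (forall x, is_iso (eta x)) /\
    (forall x y (f : chom x y), ccomp (eta y) (fmap F f) = ccomp (fmap G f) (eta x)).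

Definition cat_equivalent (C D : category) :=
  exists (F : functor C D) (G : functor D C),
    nat_iso (comp_functor G F) (id_functor C) /\
    nat_iso (comp_functor F G) (id_functor D).

Lemma sig_eq_val (T : Type) (P : T -> Prop) (a b : {x | P x}) :
  proj1_sig a = proj1_sig b -> a = b.
Proof.
case: a b => [a pa] [b pb] /= eab; subst b; by rewrite (proof_irrelevance _ pa pb).
Qed.

(* Tensors.  An element of U (x) V (resp. U (x) V (x) W) is represented *)
(* by a finite list of elementary tensors (a Sweedler expression);      *)
(* two such expressions are equal as tensors iff all bilinear (resp.    *)
(* trilinear) forms agree on them (valid since k is a field).           *)

Section Tensors.
Variable k : fieldType.

Definition sbind (T U : Type) (s : seq T) (f : T -> seq U) : seq U :=
  flatten (map f s).

Definition bilinear_form (U V : lmodType k) (phi : U -> V -> k) :=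
  (forall v a x y, phi (a *: x + y) v = a * phi x v + phi y v) /\
  (forall u a x y, phi u (a *: x + y) = a * phi u x + phi u y).

Definition trilinear_form (U V W : lmodType k) (phi : U -> V -> W -> k) :=
  [/\ (forall v w a x y, phi (a *: x + y) v w = a * phi x v w + phi y v w),
      (forall u w a x y, phi u (a *: x + y) w = a * phi u x w + phi u y w) &
      (forall u v a x y, phi u v (a *: x + y) = a * phi u v x + phi u v y)].

Definition teq2 (U V : lmodType k) (s t : seq (U * V)) :=
  forall phi : U -> V -> k, bilinear_form phi ->
    \sum_(p <- s) phi p.1 p.2 = \sum_(p <- t) phi p.1 p.2.

Definition teq3 (U V W : lmodType k) (s t : seq (U * V * W)) :=
  forall phi : U -> V -> W -> k, trilinear_form phi ->
    \sum_(p <- s) phi p.1.1 p.1.2 p.2 = \sum_(p <- t) phi p.1.1 p.1.2 p.2.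

Definition tscale2 (U V : lmodType k) (a : k) (s : seq (U * V)) :=
  [seq (a *: p.1, p.2) | p <- s].

Definition is_linear (U V : lmodType k) (f : U -> V) :=
  forall a x y, f (a *: x + y) = a *: f x + f y.

Record hopf_axioms (A : algType k) (D : A -> seq (A * A)) (e : A -> k)
    (S : A -> A) : Prop := {
  D_lin : forall a x y, teq2 (D (a *: x + y)) (tscale2 a (D x) ++ D y);
  e_lin : forall a x y, e (a *: x + y) = a * e x + e y;
  S_lin : is_linear S;
  D_coassoc : forall x,
    teq3 (sbind (D x) (fun p => [seq (q.1, q.2, p.2) | q <- D p.1]))
         (sbind (D x) (fun p => [seq (p.1, q.1, q.2) | q <- D p.2]));
  e_counit_l : forall x, \sum_(p <- D x) e p.1 *: p.2 = x;
  e_counit_r : forall x, \sum_(p <- D x) e p.2 *: p.1 = x;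
  D_mul : forall x y,
    teq2 (D (x * y)) (sbind (D x) (fun p => [seq (p.1 * q.1, p.2 * q.2) | q <- D y]));
  D_one : teq2 (D 1) [:: (1, 1)];
  e_mul : forall x y, e (x * y) = e x * e y;
  e_one : e 1 = 1;
  S_antipode_l : forall x, \sum_(p <- D x) S p.1 * p.2 = (e x)%:A;
  S_antipode_r : forall x, \sum_(p <- D x) p.1 * S p.2 = (e x)%:A }.

Record hopf_struct (A : algType k) := HopfStruct {
  comul : A -> seq (A * A);
  counit : A -> k;
  antipode : A -> A;
  hopf_ax : hopf_axioms comul counit antipode }.

Record hopfAlg := HopfAlg {
  hcarrier :> algType k;
  hstruct : hopf_struct hcarrier }.

(* morphisms of Hopf algebras (= bialgebra maps) *)
Definition hopf_map (A B : algType k) (hA : hopf_struct A) (hB : hopf_struct B)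
    (f : A -> B) :=
  [/\ is_linear f, f 1 = 1, (forall x y, f (x * y) = f x * f y),
      (forall x, teq2 (comul hB (f x)) [seq (f p.1, f p.2) | p <- comul hA x]) &
      (forall x, counit hB (f x) = counit hA x)].

(* h_{1'} (x) h_{2'1} (x) h_{2'2}
     = h_{11'} S(h_2) h_{31'} (x) h_{12'} (x) h_{32'} *)
Definition brace_compat (A : algType k) (h h' : hopf_struct A) :=
  forall x : A,
    teq3 (sbind (comul h' x) (fun p => [seq (p.1, q.1, q.2) | q <- comul h p.2]))
         (sbind (comul h x) (fun p =>
          sbind (comul h p.2) (fun q =>
          sbind (comul h' p.1) (fun u =>
          [seq (u.1 * antipode h q.1 * v.1, u.2, v.2) | v <- comul h' q.2])))).

Record hopf_brace_on (A : algType k) (h : hopf_struct A) := HopfBraceOn {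
  hb_second : hopf_struct A;
  hb_compat : brace_compat h hb_second }.

Definition hb_hom_prop (A : algType k) (h : hopf_struct A) (B1 B2 : hopf_brace_on h)
    (f : A -> A) :=
  hopf_map h h f /\ hopf_map (hb_second B1) (hb_second B2) f.

Definition comod_coalg (H : hopfAlg) (A : algType k) (hA : hopf_struct A)
    (rho : A -> seq (H * A)) :=
  let hH := hstruct H in
  [/\ (forall a x y, teq2 (rho (a *: x + y)) (tscale2 a (rho x) ++ rho y)),
      (forall x, teq3 (sbind (rho x) (fun p => [seq (q.1, q.2, p.2) | q <- comul hH p.1]))
                      (sbind (rho x) (fun p => [seq (p.1, q.1, q.2) | q <- rho p.2]))),
      (forall x, \sum_(p <- rho x) counit hH p.1 *: p.2 = x),
      (* a_(-1) (x) a_(0)1 (x) a_(0)2 = a_1(-1) a_2(-1) (x) a_1(0) (x) a_2(0) *)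
      (forall x, teq3 (sbind (rho x) (fun p => [seq (p.1, q.1, q.2) | q <- comul hA p.2]))
                      (sbind (comul hA x) (fun p =>
                       sbind (rho p.1) (fun u =>
                       [seq (u.1 * v.1, u.2, v.2) | v <- rho p.2])))) &
      (forall x, \sum_(p <- rho x) counit hA p.2 *: p.1 = (counit hA x)%:A)].

Definition bij_cocycle (A : algType k) (hA : hopf_struct A) (H : hopfAlg)
    (rho : A -> seq (H * A)) (pi : A -> H) :=
  [/\ is_linear pi, pi 1 = 1, (forall x y, pi (x * y) = pi x * pi y),
      bijective pi &
      (* pi(a)_1 (x) pi(a)_2 = pi(a_1) a_2(-1) (x) pi(a_2(0)) *)
      (forall x, teq2 (comul (hstruct H) (pi x))
                      (sbind (comul hA x) (fun p =>
                        [seq (pi p.1 * u.1, pi u.2) | u <- rho p.2])))].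

Record cocycle_on (A : algType k) (hA : hopf_struct A) := CocycleOn {
  cc_H : hopfAlg;
  cc_rho : A -> seq (cc_H * A);
  cc_pi : A -> cc_H;
  cc_comod : comod_coalg hA cc_rho;
  cc_cocycle : bij_cocycle hA cc_rho cc_pi }.

Definition cc_hom_prop (A : algType k) (hA : hopf_struct A) (E P : cocycle_on hA)
    (fg : (cc_H E -> cc_H P) * (A -> A)) :=
  let f := fg.1 in let g := fg.2 in
  [/\ hopf_map (hstruct (cc_H E)) (hstruct (cc_H P)) f,
      hopf_map hA hA g,
      (forall x, cc_pi P (g x) = f (cc_pi E x)) &
      (forall x, teq2 (cc_rho P (g x)) [seq (f p.1, g p.2) | p <- cc_rho E x])].

Arguments cc_hom_prop {A hA} E P fg.

Lemma teq2_trans (U V : lmodType k) (s t u : seq (U * V)) :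
  teq2 s t -> teq2 t u -> teq2 s u.
Proof. by move=> h1 h2 phi hphi; rewrite h1 // h2. Qed.

Lemma teq2_refl (U V : lmodType k) (s : seq (U * V)) : teq2 s s.
Proof. by []. Qed.

Lemma teq2_map (U V U' V' : lmodType k) (f : U -> U') (g : V -> V')
    (s t : seq (U * V)) :
  is_linear f -> is_linear g -> teq2 s t ->
  teq2 [seq (f p.1, g p.2) | p <- s] [seq (f p.1, g p.2) | p <- t].
Proof.
move=> lf lg h phi [h1 h2]; rewrite !big_map /=.
apply: (h (fun u v => phi (f u) (g v))); split.
- by move=> v a x y; rewrite lf h1.
- by move=> u a x y; rewrite lg h2.
Qed.

Lemma teq2_pair (U V : lmodType k) (s : seq (U * V)) :
  teq2 s [seq (p.1, p.2) | p <- s].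
Proof. by move=> phi _; rewrite big_map; apply: eq_bigr => -[]. Qed.

Lemma is_linear_comp (U V W : lmodType k) (f : V -> W) (g : U -> V) :
  is_linear f -> is_linear g -> is_linear (fun x => f (g x)).
Proof. by move=> lf lg a x y; rewrite lg lf. Qed.

Lemma is_linear_id (U : lmodType k) : is_linear (fun x : U => x).
Proof. by []. Qed.

Lemma hopf_map_id (A : algType k) (h : hopf_struct A) : hopf_map h h (fun x => x).
Proof. by split=> // x; apply: teq2_pair. Qed.

Lemma hopf_map_comp (A B C : algType k) (hA : hopf_struct A) (hB : hopf_struct B)
    (hC : hopf_struct C) (f : B -> C) (g : A -> B) :
  hopf_map hB hC f -> hopf_map hA hB g -> hopf_map hA hC (fun x => f (g x)).
Proof.
case=> lf f1 fM fD fe [lg g1 gM gD ge]; split.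
- exact: is_linear_comp.
- by rewrite g1 f1.
- by move=> x y; rewrite gM fM.
- move=> x; apply: teq2_trans (fD (g x)) _.
  apply: teq2_trans (teq2_map lf lf (gD x)) _.
  rewrite -map_comp; exact: teq2_refl.
- by move=> x; rewrite fe ge.
Qed.

Section CB.
Variables (A : algType k) (h : hopf_struct A).

Definition cb_hom (B1 B2 : hopf_brace_on h) := {f : A -> A | hb_hom_prop B1 B2 f}.

Definition cb_id (B : hopf_brace_on h) : cb_hom B B :=
  exist _ (fun x => x) (conj (hopf_map_id h) (hopf_map_id (hb_second B))).

Definition cb_comp (B1 B2 B3 : hopf_brace_on h) (f : cb_hom B2 B3) (g : cb_hom B1 B2)
  : cb_hom B1 B3 :=
  exist _ (fun x => proj1_sig f (proj1_sig g x))
    (conj (hopf_map_comp (proj1 (proj2_sig f)) (proj1 (proj2_sig g)))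
          (hopf_map_comp (proj2 (proj2_sig f)) (proj2 (proj2_sig g)))).

Definition CB : category.
Proof.
refine (@Category (hopf_brace_on h) cb_hom cb_id cb_comp _ _ _).
- by move=> x y f; apply: sig_eq_val.
- by move=> x y f; apply: sig_eq_val.
- by move=> x y z w f g i; apply: sig_eq_val.
Defined.

End CB.

Section CC.
Variables (A : algType k) (hA : hopf_struct A).

Definition cc_hom (E P : cocycle_on hA) :=
  {fg : (cc_H E -> cc_H P) * (A -> A) | cc_hom_prop E P fg}.

Lemma cc_id_prop (E : cocycle_on hA) : cc_hom_prop E E (fun x => x, fun x => x).
Proof.
rewrite /cc_hom_prop /=; split=> //; try exact: hopf_map_id.
by move=> x; apply: teq2_pair.
Qed.

Definition cc_id (E : cocycle_on hA) : cc_hom E E := exist _ _ (cc_id_prop E).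

Lemma cc_comp_prop (E1 E2 E3 : cocycle_on hA) (f : cc_hom E2 E3) (g : cc_hom E1 E2) :
  cc_hom_prop E1 E3 (fun x => (proj1_sig f).1 ((proj1_sig g).1 x),
                     fun x => (proj1_sig f).2 ((proj1_sig g).2 x)).
Proof.
case: f g => [[f1 f2] [hf1 hf2 hfp hfr]] [[g1 g2] [hg1 hg2 hgp hgr]] /=.
rewrite /cc_hom_prop /=; split.
simpl in *.
- exact: hopf_map_comp hf1 hg1.
- exact: hopf_map_comp hf2 hg2.
- by move=> x; rewrite hfp hgp.
- move=> x; apply: teq2_trans (hfr (g2 x)) _.
  have := teq2_map (let: And5 l _ _ _ _ := hf1 in l) (let: And5 l _ _ _ _ := hf2 in l) (hgr x).
  rewrite -!map_comp; apply: teq2_trans; exact: teq2_refl.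
Qed.

Definition cc_comp (E1 E2 E3 : cocycle_on hA) (f : cc_hom E2 E3) (g : cc_hom E1 E2)
  : cc_hom E1 E3 := exist _ _ (cc_comp_prop f g).

Definition CC : category.
Proof.
refine (@Category (cocycle_on hA) cc_hom cc_id cc_comp _ _ _).
- by move=> x y [[f g] p]; apply: sig_eq_val.
- by move=> x y [[f g] p]; apply: sig_eq_val.
- by move=> x y z w f g i; apply: sig_eq_val.
Defined.

End CC.

End Tensors.

(* A Hopf brace (A, Delta, Delta') gives the coaction
   rho(a) = S(a_1) a_{2 1'} (x) a_{2 2'} of (A, Delta') on A, and
   Delta'(a) = a_1 rho(a_2) says that the identity A -> (A, Delta') is a
   bijective 1-cocycle.  Both Hopf structures share their counit, since
   (e (x) e) o Delta' is a multiplicative convolution idempotent.  The brace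
   condition, read through rho, makes A a comodule coalgebra; coassociativity
   of rho is checked after multiplying on the left by Delta'(a_1), where it
   becomes coassociativity of Delta', and Delta'(a_1) is cancelled again by
   Delta'(S a_1).  Conversely, transporting the Hopf structure of H along a
   bijective 1-cocycle pi gives Delta'(a) = a_1 pi^-1(a_{2(-1)}) (x) a_{2(0)},
   a brace because the comodule is a comodule coalgebra; its coaction rho is
   the given one pushed along pi^-1, so pi is the natural isomorphism back. *)

From mathcomp Require Import all_boot all_algebra ring.
From Stdlib Require Import FunctionalExtensionality ClassicalEpsilon.

Set Implicit Arguments.
Unset Strict Implicit.
Unset Printing Implicit Defensive.

Import GRing.Theory.
Local Open Scope ring_scope.

Section LinearForms.
Variable k : fieldType.

Definition linear_form (U : lmodType k) (f : U -> k) :=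
  forall a x y, f (a *: x + y) = a * f x + f y.

Definition pair_bilinear (U V : lmodType k) (F : U * V -> k) :=
  (forall v, linear_form (fun u => F (u, v))) /\ (forall u, linear_form (fun v => F (u, v))).

Definition is_tensor_linear (U V W : lmodType k) (T : U -> seq (V * W)) :=
  forall a x y, teq2 (T (a *: x + y)) (tscale2 a (T x) ++ T y).

Lemma trilinear_formI (U V W : lmodType k) (G : U -> V -> W -> k) :
  [/\ forall v w, linear_form (fun u => G u v w), forall u w, linear_form (fun v => G u v w)
    & forall u v, linear_form (fun w => G u v w)] -> trilinear_form G.
Proof. by []. Qed.

Lemma is_linear0 (U V : lmodType k) (f : U -> V) : is_linear f -> f 0 = 0.
Proof.
move=> lf; have := lf 1 0 0; rewrite !scale1r addr0 => f0.
by apply: (addrI (f 0)); rewrite addr0 -f0.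
Qed.

Lemma is_linearD (U V : lmodType k) (f : U -> V) x y :
  is_linear f -> f (x + y) = f x + f y.
Proof. by move=> lf; have := lf 1 x y; rewrite !scale1r. Qed.

Lemma is_linearZ (U V : lmodType k) (f : U -> V) a x :
  is_linear f -> f (a *: x) = a *: f x.
Proof. by move=> lf; have := lf a x 0; rewrite !addr0 (is_linear0 lf) addr0. Qed.

Lemma is_linear_sum (U V : lmodType k) (f : U -> V) I (s : seq I) (F : I -> U) :
  is_linear f -> f (\sum_(i <- s) F i) = \sum_(i <- s) f (F i).
Proof.
move=> lf; elim: s => [|x s IHs]; first by rewrite !big_nil (is_linear0 lf).
by rewrite !big_cons (is_linearD _ _ lf) IHs.
Qed.

Lemma is_linear_mull (A : algType k) (U : lmodType k) (g : U -> A) c :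
  is_linear g -> is_linear (fun u => c * g u).
Proof. by move=> lg a x y; rewrite lg mulrDr scalerAr. Qed.

Lemma is_linear_mulr (A : algType k) (U : lmodType k) (g : U -> A) c :
  is_linear g -> is_linear (fun u => g u * c).
Proof. by move=> lg a x y; rewrite lg mulrDl scalerAl. Qed.

(* A linear form is a linear map into the regular module [k^o]. *)
Lemma linear_formZ (U : lmodType k) (f : U -> k) a x :
  linear_form f -> f (a *: x) = a * f x.
Proof. exact: (@is_linearZ U k^o f). Qed.

Lemma linear_form_sum (U : lmodType k) (f : U -> k) I (s : seq I) (F : I -> U) :
  linear_form f -> f (\sum_(i <- s) F i) = \sum_(i <- s) f (F i).
Proof. exact: (@is_linear_sum U k^o f). Qed.

Lemma linear_form_big (U : lmodType k) I (s : seq I) (F : U -> I -> k) :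
  (forall i, linear_form (fun u => F u i)) -> linear_form (fun u => \sum_(i <- s) F u i).
Proof.
by move=> lF a x y; rewrite mulr_sumr -big_split; apply: eq_bigr => i _; apply: lF.
Qed.

Lemma linear_form_mull (U : lmodType k) (f : U -> k) c :
  linear_form f -> linear_form (fun u => c * f u).
Proof. by move=> lf a x y; rewrite lf mulrDr mulrCA. Qed.

Lemma linear_form_mulr (U : lmodType k) (f : U -> k) c :
  linear_form f -> linear_form (fun u => f u * c).
Proof. by move=> lf a x y; rewrite lf mulrDl mulrA. Qed.

Lemma linear_form_comp (U V : lmodType k) (f : V -> k) (g : U -> V) :
  linear_form f -> is_linear g -> linear_form (fun u => f (g u)).
Proof. by move=> lf lg a x y; rewrite lg lf. Qed.

Lemma pair_bilinear_compl (U V X : lmodType k) (F : U * V -> k) (g : X -> U) v :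
  pair_bilinear F -> is_linear g -> linear_form (fun u => F (g u, v)).
Proof. by move=> [lF _] lg; exact: (linear_form_comp (lF v) lg). Qed.

Lemma pair_bilinear_compr (U V X : lmodType k) (F : U * V -> k) (g : X -> V) u :
  pair_bilinear F -> is_linear g -> linear_form (fun v => F (u, g v)).
Proof. by move=> [_ lF] lg; exact: (linear_form_comp (lF u) lg). Qed.

Lemma trilinear_form_comp1 (U V W X : lmodType k) (G : U -> V -> W -> k) (g : X -> U) v w :
  trilinear_form G -> is_linear g -> linear_form (fun u => G (g u) v w).
Proof. by move=> [lG _ _] lg a x y; rewrite lg lG. Qed.

Lemma trilinear_form_comp2 (U V W X : lmodType k) (G : U -> V -> W -> k) (g : X -> V) u w :
  trilinear_form G -> is_linear g -> linear_form (fun v => G u (g v) w).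
Proof. by move=> [_ lG _] lg a x y; rewrite lg lG. Qed.

Lemma trilinear_form_comp3 (U V W X : lmodType k) (G : U -> V -> W -> k) (g : X -> W) u v :
  trilinear_form G -> is_linear g -> linear_form (fun w => G u v (g w)).
Proof. by move=> [_ _ lG] lg a x y; rewrite lg lG. Qed.

Lemma big_pair (V : nmodType) (X Y : Type) (s : seq (X * Y)) (F : X * Y -> V) :
  \sum_(p <- s) F (p.1, p.2) = \sum_(p <- s) F p.
Proof. by apply: eq_bigr => -[]. Qed.

Lemma big_sbind (V : nmodType) (X Y : Type) (s : seq X) (f : X -> seq Y) (F : Y -> V) :
  \sum_(p <- sbind s f) F p = \sum_(p <- s) \sum_(q <- f p) F q.
Proof.
rewrite /sbind; elim: s => [|x s IHs] /=; first by rewrite !big_nil.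
by rewrite big_cat big_cons IHs.
Qed.

Lemma teq2E (U V : lmodType k) (s t : seq (U * V)) F :
  teq2 s t -> pair_bilinear F -> \sum_(p <- s) F p = \sum_(p <- t) F p.
Proof.
move=> st [lF1 lF2]; rewrite -!(big_pair _ F).
by apply: (st (fun u v => F (u, v))); split=> *; [apply: lF1 | apply: lF2].
Qed.

Lemma teq2I (U V : lmodType k) (s t : seq (U * V)) :
  (forall F, pair_bilinear F -> \sum_(p <- s) F p = \sum_(p <- t) F p) -> teq2 s t.
Proof.
move=> st phi [lphi1 lphi2]; apply: (st (fun p => phi p.1 p.2)).
by split=> u a x y /=; [apply: lphi1 | apply: lphi2].
Qed.

Lemma linear_form_tensor (U V W : lmodType k) (T : U -> seq (V * W)) F :
  is_tensor_linear T -> pair_bilinear F -> linear_form (fun x => \sum_(p <- T x) F p).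
Proof.
move=> lT lF a x y; rewrite (teq2E (lT a x y) lF) big_cat big_map /= mulr_sumr.
by congr (_ + _); apply: eq_bigr => -[u v] _ /=; rewrite (linear_formZ _ _ (lF.1 v)).
Qed.

Lemma linear_form_tensor_comp (U U' V W : lmodType k) (T : U' -> seq (V * W)) (g : U -> U') F :
  is_tensor_linear T -> pair_bilinear F -> is_linear g ->
  linear_form (fun u => \sum_(p <- T (g u)) F p).
Proof. by move=> lT lF lg a x y; rewrite lg; apply: linear_form_tensor. Qed.

End LinearForms.

Section HopfStructure.
Variables (k : fieldType) (B : algType k) (hB : hopf_struct B).
Local Notation D := (comul hB).
Local Notation e := (counit hB).
Local Notation S := (antipode hB).

Lemma linear_form_counit : linear_form e.
Proof. exact: e_lin (hopf_ax hB). Qed.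

Lemma is_linear_antipode : is_linear S.
Proof. exact: S_lin (hopf_ax hB). Qed.

Lemma is_tensor_linear_comul : is_tensor_linear D.
Proof. exact: D_lin (hopf_ax hB). Qed.

End HopfStructure.

Ltac solve_is_linear :=
  first [ exact: is_linear_id | assumption | exact: is_linear_antipode
        | apply: is_linear_mull; solve_is_linear | apply: is_linear_mulr; solve_is_linear
        | apply: is_linear_comp;
            [first [assumption | exact: is_linear_antipode] | solve_is_linear] ].

Ltac solve_linear_form :=
  cbn [fst snd];
  first [ assumption
        | exact: linear_form_counit
        | apply: trilinear_formI; split; intros; solve_linear_form
        | split; intros; solve_linear_form
        | apply: linear_form_big; intros; solve_linear_form
        | apply: linear_form_tensor_comp;
            [first [exact: is_tensor_linear_comul | assumption]
            | solve_linear_form | solve_is_linear]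
        | apply: linear_form_mull; solve_linear_form
        | apply: linear_form_mulr; solve_linear_form
        | match goal with H : trilinear_form _ |- _ =>
            first [ apply: (trilinear_form_comp1 _ _ H); solve_is_linear
                  | apply: (trilinear_form_comp2 _ _ H); solve_is_linear
                  | apply: (trilinear_form_comp3 _ _ H); solve_is_linear ] end
        | match goal with H : pair_bilinear _ |- _ =>
            first [ apply: (pair_bilinear_compl _ H); solve_is_linear
                  | apply: (pair_bilinear_compr _ H); solve_is_linear ] end
        | match goal with H : forall _ _, linear_form _ |- _ => apply: H end
        | apply: linear_form_comp;
            [first [exact: linear_form_counit | assumption] | solve_is_linear] ].

Section HopfAlgebra.
Variables (k : fieldType) (B : algType k) (hB : hopf_struct B).
Local Notation D := (comul hB).
Local Notation e := (counit hB).
Local Notation S := (antipode hB).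

Lemma big_coassoc (G : B -> B -> B -> k) x : trilinear_form G ->
  \sum_(p <- D x) \sum_(q <- D p.1) G q.1 q.2 p.2 =
  \sum_(p <- D x) \sum_(q <- D p.2) G p.1 q.1 q.2.
Proof.
move=> lG; have := D_coassoc (hopf_ax hB) x lG; rewrite !big_sbind.
by under eq_bigr do rewrite big_map; under [RHS]eq_bigr do rewrite big_map.
Qed.

Lemma big_counit_l (L : B -> k) x : linear_form L -> \sum_(p <- D x) e p.1 * L p.2 = L x.
Proof.
move=> lL; rewrite -{2}(e_counit_l (hopf_ax hB) x) (linear_form_sum _ _ lL).
by apply: eq_bigr => p _; rewrite (linear_formZ _ _ lL).
Qed.

Lemma big_counit_r (L : B -> k) x : linear_form L -> \sum_(p <- D x) e p.2 * L p.1 = L x.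
Proof.
move=> lL; rewrite -{2}(e_counit_r (hopf_ax hB) x) (linear_form_sum _ _ lL).
by apply: eq_bigr => p _; rewrite (linear_formZ _ _ lL).
Qed.

Lemma big_antipode_l (L : B -> k) x : linear_form L ->
  \sum_(p <- D x) L (S p.1 * p.2) = e x * L 1.
Proof.
by move=> lL; rewrite -(linear_form_sum _ _ lL) (S_antipode_l (hopf_ax hB)) (linear_formZ _ _ lL).
Qed.

Lemma big_antipode_r (L : B -> k) x : linear_form L ->
  \sum_(p <- D x) L (p.1 * S p.2) = e x * L 1.
Proof.
by move=> lL; rewrite -(linear_form_sum _ _ lL) (S_antipode_r (hopf_ax hB)) (linear_formZ _ _ lL).
Qed.

Lemma big_comulM (F : B * B -> k) x y : pair_bilinear F ->
  \sum_(p <- D (x * y)) F p = \sum_(p <- D x) \sum_(q <- D y) F (p.1 * q.1, p.2 * q.2).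
Proof.
move=> lF; rewrite (teq2E (D_mul (hopf_ax hB) x y) lF) big_sbind.
by under eq_bigr do rewrite big_map.
Qed.

Lemma big_comul1 (F : B * B -> k) : pair_bilinear F -> \sum_(p <- D 1) F p = F (1, 1).
Proof. by move=> lF; rewrite (teq2E (D_one (hopf_ax hB)) lF) big_seq1. Qed.

Lemma counitM x y : e (x * y) = e x * e y.
Proof. exact: (e_mul (hopf_ax hB)). Qed.

Lemma counit1 : e 1 = 1.
Proof. exact: (e_one (hopf_ax hB)). Qed.

Lemma counit_antipode x : e (S x) = e x.
Proof.
have le := linear_form_counit hB; have lS := is_linear_antipode hB.
rewrite -(big_counit_r (L := fun y => e (S y))); last by solve_linear_form.
under eq_bigr do rewrite mulrC -counitM.
by rewrite (big_antipode_l x le) counit1 mulr1.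
Qed.

Lemma big_antipode_cancel_l (F : B * B -> k) x : pair_bilinear F ->
  \sum_(p <- D x) \sum_(q <- D p.2) F (S p.1 * q.1, q.2) = F (1, x).
Proof.
move=> lF; have lS := is_linear_antipode hB.
rewrite -(big_coassoc (G := fun a b c => F (S a * b, c))) /=; last by solve_linear_form.
transitivity (\sum_(p <- D x) e p.1 * F (1, p.2));
  last by apply: (big_counit_l (L := fun y => F (1, y))); solve_linear_form.
apply: eq_bigr => p _.
by apply: (big_antipode_l (L := fun z => F (z, p.2))); solve_linear_form.
Qed.

Lemma big_antipode_cancel_r (F : B * B -> k) x : pair_bilinear F ->
  \sum_(p <- D x) \sum_(q <- D p.2) F (p.1 * S q.1, q.2) = F (1, x).
Proof.
move=> lF; have lS := is_linear_antipode hB.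
rewrite -(big_coassoc (G := fun a b c => F (a * S b, c))) /=; last by solve_linear_form.
transitivity (\sum_(p <- D x) e p.1 * F (1, p.2));
  last by apply: (big_counit_l (L := fun y => F (1, y))); solve_linear_form.
apply: eq_bigr => p _.
by apply: (big_antipode_r (L := fun z => F (z, p.2))); solve_linear_form.
Qed.

End HopfAlgebra.

Lemma big_hopf_map_comul (k : fieldType) (A B : algType k) (hA : hopf_struct A)
    (hB : hopf_struct B) (g : A -> B) (F : B * B -> k) x :
  hopf_map hA hB g -> pair_bilinear F ->
  \sum_(p <- comul hB (g x)) F p = \sum_(p <- comul hA x) F (g p.1, g p.2).
Proof. by case=> _ _ _ gD _ lF; rewrite (teq2E (gD x) lF) big_map. Qed.

(* Both [S o g] and [g o S] are convolution inverses of [g]. *)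
Lemma big_hopf_map_antipode (k : fieldType) (A : algType k) (hA : hopf_struct A)
    (g : A -> A) (F : A * A -> k) x :
  hopf_map hA hA g -> pair_bilinear F ->
  \sum_(p <- comul hA x) F (antipode hA (g p.1), p.2) =
  \sum_(p <- comul hA x) F (g (antipode hA p.1), p.2).
Proof.
move=> hg lF; have lS := is_linear_antipode hA; have le := linear_form_counit hA.
case: (hg) => lg g1 gM _ ge; set S := antipode hA.
transitivity (\sum_(p <- comul hA x) \sum_(q <- comul hA p.1) \sum_(r <- comul hA q.1)
   F (g (S r.1 * r.2) * S (g q.2), p.2)).
  apply: eq_bigr => p _.
  rewrite -(big_counit_l hA (L := fun y => F (S (g y), p.2))); last by solve_linear_form.
  apply: eq_bigr => q _.
  rewrite (big_antipode_l hA (L := fun y => F (g y * S (g q.2), p.2))); last by solve_linear_form.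
  by rewrite g1 mul1r.
transitivity (\sum_(p <- comul hA x) \sum_(q <- comul hA p.1) \sum_(r <- comul hA q.2)
   F (g (S q.1) * (g r.1 * S (g r.2)), p.2)).
  apply: eq_bigr => p _.
  rewrite -(big_coassoc hA (G := fun a b c => F (g (S a) * (g b * S (g c)), p.2)));
    last by solve_linear_form.
  by apply: eq_bigr => q _; apply: eq_bigr => r _; rewrite gM mulrA.
apply: eq_bigr => p _.
rewrite -(big_counit_r hA (L := fun y => F (g (S y), p.2))); last by solve_linear_form.
apply: eq_bigr => q _.
rewrite -(big_hopf_map_comul (F := fun r => F (g (S q.1) * (r.1 * S r.2), p.2)) _ hg);
  last by solve_linear_form.
rewrite (big_antipode_r hA (L := fun y => F (g (S q.1) * y, p.2))); last by solve_linear_form.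
by rewrite ge mulr1.
Qed.

Section BraceCoaction.
Variables (k : fieldType) (A : algType k) (h h' : hopf_struct A).
Local Notation D := (comul h).
Local Notation S := (antipode h).
Local Notation D' := (comul h').

Definition brace_coaction x := sbind (D x) (fun p => [seq (S p.1 * u.1, u.2) | u <- D' p.2]).
Local Notation rho := brace_coaction.

Lemma big_brace_coaction (V : nmodType) (F : A * A -> V) x :
  \sum_(w <- rho x) F w = \sum_(p <- D x) \sum_(u <- D' p.2) F (S p.1 * u.1, u.2).
Proof. by rewrite big_sbind; apply: eq_bigr => p _; rewrite big_map. Qed.

Lemma is_tensor_linear_brace_coaction : is_tensor_linear rho.
Proof.
have lS := is_linear_antipode h.
move=> a x y; apply: teq2I => F lF; rewrite big_cat big_map.
have -> : \sum_(w <- rho x) F (a *: w.1, w.2) = a * \sum_(w <- rho x) F w.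
  by rewrite mulr_sumr; apply: eq_bigr => -[u v] _; rewrite /= (linear_formZ _ _ (lF.1 v)).
rewrite !big_brace_coaction.
apply: (linear_form_tensor (is_tensor_linear_comul h)
          (F := fun p => \sum_(u <- D' p.2) F (S p.1 * u.1, u.2))).
solve_linear_form.
Qed.

Lemma big_comul_coaction (F : A * A -> k) x : pair_bilinear F ->
  \sum_(u <- D' x) F u = \sum_(p <- D x) \sum_(w <- rho p.2) F (p.1 * w.1, w.2).
Proof.
move=> lF; have lS := is_linear_antipode h.
transitivity (\sum_(p <- D x) \sum_(q <- D p.2) \sum_(u <- D' q.2) F (p.1 * S q.1 * u.1, u.2)).
  rewrite (big_antipode_cancel_r h (F := fun w => \sum_(u <- D' w.2) F (w.1 * u.1, u.2)));
    last by solve_linear_form.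
  by rewrite /= -big_pair; apply: eq_bigr => u _; rewrite mul1r.
apply: eq_bigr => p _; rewrite big_brace_coaction.
by apply: eq_bigr => q _; apply: eq_bigr => u _; rewrite /= mulrA.
Qed.

Lemma comul_coaction x :
  teq2 (D' x) (sbind (D x) (fun p => [seq (p.1 * w.1, w.2) | w <- rho p.2])).
Proof.
apply: teq2I => F lF; rewrite big_comul_coaction // big_sbind.
by apply: eq_bigr => p _; rewrite big_map.
Qed.

Lemma brace_compatP : brace_compat h h' <->
  forall x (G : A -> A -> A -> k), trilinear_form G ->
    \sum_(p <- D' x) \sum_(q <- D p.2) G p.1 q.1 q.2 =
    \sum_(p <- D x) \sum_(u <- D' p.1) \sum_(w <- rho p.2) G (u.1 * w.1) u.2 w.2.
Proof.
have lhsE x (G : A -> A -> A -> k) :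
    \sum_(t <- sbind (D' x) (fun p => [seq (p.1, q.1, q.2) | q <- D p.2])) G t.1.1 t.1.2 t.2 =
    \sum_(p <- D' x) \sum_(q <- D p.2) G p.1 q.1 q.2.
  by rewrite big_sbind; under eq_bigr do rewrite big_map.
have rhsE x (G : A -> A -> A -> k) :
    \sum_(t <- sbind (D x) (fun p => sbind (D p.2) (fun q => sbind (D' p.1) (fun u =>
                 [seq (u.1 * S q.1 * v.1, u.2, v.2) | v <- D' q.2]))))
      G t.1.1 t.1.2 t.2 =
    \sum_(p <- D x) \sum_(u <- D' p.1) \sum_(w <- rho p.2) G (u.1 * w.1) u.2 w.2.
  rewrite big_sbind; apply: eq_bigr => p _; rewrite big_sbind.
  under eq_bigr do rewrite big_sbind; under eq_bigr do under eq_bigr do rewrite big_map.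
  rewrite exchange_big; apply: eq_bigr => u _; rewrite big_brace_coaction.
  by apply: eq_bigr => q _; apply: eq_bigr => v _; rewrite /= mulrA.
split=> hC x G lG; [rewrite -lhsE -rhsE | rewrite lhsE rhsE]; exact: hC.
Qed.

End BraceCoaction.

Section BraceCounit.
Variables (k : fieldType) (A : algType k) (h h' : hopf_struct A).
Hypothesis hC : brace_compat h h'.
Local Notation D := (comul h).
Local Notation e := (counit h).
Local Notation S := (antipode h).
Local Notation D' := (comul h').
Local Notation e' := (counit h').
Local Notation T := (antipode h').
Local Notation rho := (brace_coaction h h').

Definition counit2 x := \sum_(u <- D' x) e u.1 * e u.2.

Lemma linear_form_counit2 : linear_form counit2.
Proof. have le := linear_form_counit h; rewrite /counit2; solve_linear_form. Qed.

Lemma counit2M x y : counit2 (x * y) = counit2 x * counit2 y.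
Proof.
have le := linear_form_counit h.
rewrite /counit2 (big_comulM h' (F := fun u => e u.1 * e u.2)); last by solve_linear_form.
rewrite mulr_suml; apply: eq_bigr => p _; rewrite mulr_sumr; apply: eq_bigr => q _ /=.
by rewrite !counitM; ring.
Qed.

Lemma counit21 : counit2 1 = 1.
Proof.
have le := linear_form_counit h.
by rewrite /counit2 (big_comul1 h' (F := fun u => e u.1 * e u.2)) /= ?counit1 ?mulr1 //;
  solve_linear_form.
Qed.

Lemma big_counit_coaction y : \sum_(w <- rho y) e w.1 * e w.2 = counit2 y.
Proof.
have lc := linear_form_counit2.
rewrite big_brace_coaction -(big_counit_l h (L := counit2)) //.
apply: eq_bigr => p _; rewrite /counit2 mulr_sumr.
by apply: eq_bigr => u _; rewrite /= counitM counit_antipode mulrA.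
Qed.

(* Apply [e (x) e (x) e] to the compatibility condition. *)
Lemma counit2_conv x : counit2 x = \sum_(p <- D x) counit2 p.1 * counit2 p.2.
Proof.
have le := linear_form_counit h; have lS := is_linear_antipode h.
have := (proj1 (brace_compatP h h') hC x (fun a b c => e a * e b * e c)).
rewrite /=; move/(_ ltac:(solve_linear_form)) => compat_e.
transitivity (\sum_(p <- D' x) \sum_(q <- D p.2) e p.1 * e q.1 * e q.2).
  rewrite /counit2; apply: eq_bigr => p _.
  rewrite -(big_counit_l h (L := e) p.2) // mulr_sumr.
  by apply: eq_bigr => q _; rewrite mulrA.
rewrite compat_e; apply: eq_bigr => p _.
rewrite -(big_counit_coaction p.2) /counit2 mulr_suml; apply: eq_bigr => u _.
by rewrite mulr_sumr; apply: eq_bigr => w _; rewrite counitM; ring.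
Qed.

(* [counit2] is a convolution idempotent with convolution inverse [counit2 \o S]. *)
Lemma counit2_counit x : counit2 x = e x.
Proof.
have le := linear_form_counit h; have lS := is_linear_antipode h.
have lc := linear_form_counit2.
have conv_inv y : e y = \sum_(p <- D y) counit2 p.1 * counit2 (S p.2).
  rewrite -[LHS]mulr1 -counit21 -(big_antipode_r h (L := counit2)) //.
  by apply: eq_bigr => p _; rewrite counit2M.
apply/esym; rewrite conv_inv.
transitivity (\sum_(p <- D x) \sum_(q <- D p.1) counit2 q.1 * counit2 q.2 * counit2 (S p.2)).
  by apply: eq_bigr => p _; rewrite [counit2 p.1]counit2_conv mulr_suml.
rewrite (big_coassoc h (G := fun a b c => counit2 a * counit2 b * counit2 (S c)));
  last by solve_linear_form.
rewrite -(big_counit_r h (L := counit2) x) //.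
apply: eq_bigr => p _; rewrite [RHS]mulrC conv_inv mulr_sumr.
by apply: eq_bigr => q _; rewrite mulrA.
Qed.

Lemma brace_counit x : e' x = e x.
Proof.
have le := linear_form_counit h; have lT := is_linear_antipode h'.
have conv_inv y : e' y = \sum_(u <- D' y) e u.1 * e (T u.2).
  rewrite -[LHS]mulr1 -(counit1 h) -(big_antipode_r h' (L := e) y) //.
  by apply: eq_bigr => u _; rewrite counitM.
rewrite conv_inv.
transitivity (\sum_(u <- D' x) \sum_(w <- D' u.1) e w.1 * e w.2 * e (T u.2)).
  by apply: eq_bigr => u _; rewrite -counit2_counit /counit2 mulr_suml.
rewrite (big_coassoc h' (G := fun a b c => e a * e b * e (T c))); last by solve_linear_form.
rewrite -(big_counit_r h' (L := e) x) //.
apply: eq_bigr => u _; rewrite mulrC conv_inv mulr_sumr.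
by apply: eq_bigr => w _; rewrite mulrA.
Qed.

End BraceCounit.

Section BraceComodule.
Variables (k : fieldType) (A : algType k) (h h' : hopf_struct A).
Hypothesis hC : brace_compat h h'.
Local Notation D := (comul h).
Local Notation e := (counit h).
Local Notation S := (antipode h).
Local Notation D' := (comul h').
Local Notation e' := (counit h').
Local Notation rho := (brace_coaction h h').

Lemma brace_coaction_counit x : \sum_(w <- rho x) e' w.1 *: w.2 = x.
Proof.
rewrite big_brace_coaction.
under eq_bigr => p _ do under eq_bigr => u _ do rewrite /= counitM -scalerA.
under eq_bigr => p _ do
  rewrite -scaler_sumr (e_counit_l (hopf_ax h')) (brace_counit hC) counit_antipode.
exact: (e_counit_l (hopf_ax h)).
Qed.

Lemma brace_coaction_counit_coalg x : \sum_(w <- rho x) e w.2 *: w.1 = (e x)%:A.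
Proof.
rewrite big_brace_coaction.
under eq_bigr => p _ do under eq_bigr => u _ do rewrite /= -(brace_counit hC) scalerAr.
under eq_bigr => p _ do rewrite -mulr_sumr (e_counit_r (hopf_ax h')).
exact: (S_antipode_l (hopf_ax h)).
Qed.

Lemma big_brace_coaction_comul (G : A -> A -> A -> k) x : trilinear_form G ->
  \sum_(w <- rho x) \sum_(q <- D w.2) G w.1 q.1 q.2 =
  \sum_(m <- D x) \sum_(w1 <- rho m.1) \sum_(w2 <- rho m.2) G (w1.1 * w2.1) w1.2 w2.2.
Proof.
move=> lG; have lS := is_linear_antipode h; have lrho := is_tensor_linear_brace_coaction h h'.
transitivity (\sum_(p <- D x) \sum_(m <- D p.2) \sum_(u <- D' m.1) \sum_(w <- rho m.2)
                G (S p.1 * u.1 * w.1) u.2 w.2).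
  rewrite big_brace_coaction; apply: eq_bigr => p _.
  rewrite (proj1 (brace_compatP h h') hC p.2 (fun a b c => G (S p.1 * a) b c));
    last by solve_linear_form.
  by do 3!(apply: eq_bigr => ? _); rewrite mulrA.
rewrite -(big_coassoc h (G := fun a b c => \sum_(u <- D' b) \sum_(w <- rho c)
                                G (S a * u.1 * w.1) u.2 w.2)); last by solve_linear_form.
by apply: eq_bigr => m _; rewrite [RHS]big_brace_coaction.
Qed.

Lemma brace_coaction_comul x :
  teq3 (sbind (rho x) (fun p => [seq (p.1, q.1, q.2) | q <- D p.2]))
       (sbind (D x) (fun p => sbind (rho p.1) (fun u =>
           [seq (u.1 * v.1, u.2, v.2) | v <- rho p.2]))).
Proof.
move=> G lG; rewrite big_sbind; under eq_bigr do rewrite big_map /=.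
rewrite big_brace_coaction_comul // big_sbind; apply: eq_bigr => m _.
by rewrite [RHS]big_sbind; under [RHS]eq_bigr do rewrite big_map.
Qed.

End BraceComodule.

Section BraceCoassoc.
Variables (k : fieldType) (A : algType k) (h h' : hopf_struct A).
Hypothesis hC : brace_compat h h'.
Local Notation D := (comul h).
Local Notation e := (counit h).
Local Notation S := (antipode h).
Local Notation D' := (comul h').
Local Notation rho := (brace_coaction h h').

Local Notation translate phi s := (fun a b c => phi (s.1 * a) (s.2 * b) c).

Section Cancel.
Variable Z : (A -> A -> A -> k) -> A -> k.
Hypothesis Z_linear : forall phi, trilinear_form phi -> linear_form (Z phi).
Hypothesis Z_translate :
  forall phi b, trilinear_form phi -> pair_bilinear (fun s => Z (translate phi s) b).

Lemma counit_translate phi y b : trilinear_form phi ->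
  e y * Z phi b =
  \sum_(q <- D y) \sum_(t <- D' (S q.1)) \sum_(s <- D' q.2)
     Z (translate phi (t.1 * s.1, t.2 * s.2)) b.
Proof.
move=> lphi; have lZ := Z_translate b lphi.
have -> : Z phi b = \sum_(s <- D' 1) Z (translate phi s) b.
  rewrite (big_comul1 h' (F := fun s => Z (translate phi s) b)) //=.
  by congr (Z _ b); do 3 apply: functional_extensionality => ?; rewrite !mul1r.
have lL := linear_form_tensor (is_tensor_linear_comul h') lZ.
rewrite -(linear_formZ _ _ lL) -(S_antipode_l (hopf_ax h) y) (linear_form_sum _ _ lL).
by apply: eq_bigr => q _; rewrite (big_comulM h' (F := fun s => Z (translate phi s) b)).
Qed.

(* [Delta'(S a_1) Delta'(a_2) = e(a_1) Delta'(1)], so [Z] is recovered from its translates. *)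
Lemma translate_cancel phi a : trilinear_form phi ->
  Z phi a =
  \sum_(p <- D a) \sum_(t <- D' (S p.1)) \sum_(q <- D p.2) \sum_(s <- D' q.1)
     Z (translate (translate phi t) s) q.2.
Proof.
move=> lphi; have lS := is_linear_antipode h.
have lZ u v : linear_form (Z (fun a b c => phi (u * a) (v * b) c)).
  by apply: Z_linear; solve_linear_form.
rewrite -(big_counit_l h (L := Z phi) a); last exact: Z_linear.
under eq_bigr => p _ do rewrite counit_translate //.
rewrite (big_coassoc h (G := fun a1 a2 a3 => \sum_(t <- D' (S a1)) \sum_(s <- D' a2)
     Z (translate phi (t.1 * s.1, t.2 * s.2)) a3)); last first.
  apply: trilinear_formI; split=> [a2 a3|a1 a3|a1 a2]; last by solve_linear_form.
  - by have ? := Z_translate a3 lphi; solve_linear_form.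
  - by have ? := Z_translate a3 lphi; solve_linear_form.
apply: eq_bigr => p _; rewrite exchange_big /=.
apply: eq_bigr => t _; apply: eq_bigr => q _; apply: eq_bigr => s _.
by congr (Z _ _); do 3 apply: functional_extensionality => ?; rewrite !mulrA.
Qed.

End Cancel.

(* The two sides [(Delta' (x) id) rho] and [(id (x) rho) rho] of coassociativity. *)
Definition comul_coaction_form (phi : A -> A -> A -> k) a :=
  \sum_(w <- rho a) \sum_(q <- D' w.1) phi q.1 q.2 w.2.
Definition coaction_coaction_form (phi : A -> A -> A -> k) a :=
  \sum_(w <- rho a) \sum_(z <- rho w.2) phi w.1 z.1 z.2.

Lemma linear_form_comul_coaction phi :
  trilinear_form phi -> linear_form (comul_coaction_form phi).
Proof.
have lrho := is_tensor_linear_brace_coaction h h'.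
by move=> lphi; rewrite /comul_coaction_form; solve_linear_form.
Qed.

Lemma pair_bilinear_comul_coaction phi b : trilinear_form phi ->
  pair_bilinear (fun s => comul_coaction_form (translate phi s) b).
Proof.
have lrho := is_tensor_linear_brace_coaction h h'.
by move=> lphi; rewrite /comul_coaction_form; solve_linear_form.
Qed.

Lemma linear_form_coaction_coaction phi :
  trilinear_form phi -> linear_form (coaction_coaction_form phi).
Proof.
have lrho := is_tensor_linear_brace_coaction h h'.
by move=> lphi; rewrite /coaction_coaction_form; solve_linear_form.
Qed.

Lemma pair_bilinear_coaction_coaction phi b : trilinear_form phi ->
  pair_bilinear (fun s => coaction_coaction_form (translate phi s) b).
Proof.
have lrho := is_tensor_linear_brace_coaction h h'.
by move=> lphi; rewrite /coaction_coaction_form; solve_linear_form.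
Qed.

Lemma translate_comul_coaction phi a : trilinear_form phi ->
  \sum_(p <- D a) \sum_(s <- D' p.1) comul_coaction_form (translate phi s) p.2 =
  \sum_(u <- D' a) \sum_(q <- D' u.1) phi q.1 q.2 u.2.
Proof.
move=> lphi; have lrho := is_tensor_linear_brace_coaction h h'.
rewrite (big_comul_coaction h h' (F := fun u => \sum_(q <- D' u.1) phi q.1 q.2 u.2));
  last by solve_linear_form.
apply: eq_bigr => p _; rewrite /comul_coaction_form exchange_big /=.
apply: eq_bigr => w _.
by rewrite (big_comulM h' (F := fun q => phi q.1 q.2 w.2)) //; solve_linear_form.
Qed.

Lemma translate_coaction_coaction phi a : trilinear_form phi ->
  \sum_(u <- D' a) \sum_(q <- D' u.2) phi u.1 q.1 q.2 =
  \sum_(p <- D a) \sum_(s <- D' p.1) coaction_coaction_form (translate phi s) p.2.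
Proof.
move=> lphi; have lrho := is_tensor_linear_brace_coaction h h'.
rewrite (big_comul_coaction h h' (F := fun u => \sum_(q <- D' u.2) phi u.1 q.1 q.2));
  last by solve_linear_form.
transitivity (\sum_(p <- D a) \sum_(w <- rho p.2) \sum_(r <- D w.2) \sum_(z <- rho r.2)
                phi (p.1 * w.1) (r.1 * z.1) z.2).
  apply: eq_bigr => p _; apply: eq_bigr => w _.
  by rewrite (big_comul_coaction h h' (F := fun v => phi (p.1 * w.1) v.1 v.2)) //;
    solve_linear_form.
transitivity (\sum_(p <- D a) \sum_(m <- D p.2) \sum_(w1 <- rho m.1) \sum_(w2 <- rho m.2)
                \sum_(z <- rho w2.2) phi (p.1 * w1.1 * w2.1) (w1.2 * z.1) z.2).
  apply: eq_bigr => p _.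
  rewrite (big_brace_coaction_comul hC (G := fun a b c =>
             \sum_(z <- rho c) phi (p.1 * a) (b * z.1) z.2)); last by solve_linear_form.
  by do 4!(apply: eq_bigr => ? _); rewrite mulrA.
rewrite -(big_coassoc h (G := fun a1 a2 a3 => \sum_(w1 <- rho a2) \sum_(w2 <- rho a3)
            \sum_(z <- rho w2.2) phi (a1 * w1.1 * w2.1) (w1.2 * z.1) z.2));
  last by solve_linear_form.
apply: eq_bigr => p _.
by rewrite (big_comul_coaction h h' (F := fun s => coaction_coaction_form (translate phi s) p.2));
  last exact: pair_bilinear_coaction_coaction.
Qed.

Lemma brace_coaction_coassoc x :
  teq3 (sbind (rho x) (fun p => [seq (q.1, q.2, p.2) | q <- D' p.1]))
       (sbind (rho x) (fun p => [seq (p.1, q.1, q.2) | q <- rho p.2])).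
Proof.
move=> phi lphi.
transitivity (comul_coaction_form phi x).
  by rewrite big_sbind; under eq_bigr do rewrite big_map.
transitivity (coaction_coaction_form phi x).
  rewrite (translate_cancel linear_form_comul_coaction pair_bilinear_comul_coaction x lphi).
  rewrite (translate_cancel linear_form_coaction_coaction pair_bilinear_coaction_coaction x lphi).
  apply: eq_bigr => p _; apply: eq_bigr => t _.
  have lphit : trilinear_form (translate phi t) by solve_linear_form.
  rewrite (translate_comul_coaction p.2 lphit) (big_coassoc h' (G := translate phi t)) //.
  exact: (translate_coaction_coaction p.2 lphit).
by rewrite [RHS]big_sbind; under [RHS]eq_bigr do rewrite big_map.
Qed.

End BraceCoassoc.

Section Transport.
Variables (k : fieldType) (A B : algType k) (hB : hopf_struct B).
Variables (pi : A -> B) (pinv : B -> A).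
Hypotheses (lpi : is_linear pi) (pi1 : pi 1 = 1) (piM : forall x y, pi (x * y) = pi x * pi y).
Hypotheses (piK : cancel pi pinv) (pinvK : cancel pinv pi).
Local Notation D := (comul hB).
Local Notation e := (counit hB).
Local Notation S := (antipode hB).

Lemma is_linear_pinv : is_linear pinv.
Proof. by move=> a x y; apply: (can_inj piK); rewrite lpi !pinvK. Qed.

Lemma pinv1 : pinv 1 = 1.
Proof. by rewrite -pi1 piK. Qed.

Lemma pinvM x y : pinv (x * y) = pinv x * pinv y.
Proof. by apply: (can_inj piK); rewrite piM !pinvK. Qed.

Definition transport_comul a := [seq (pinv p.1, pinv p.2) | p <- D (pi a)].
Definition transport_counit a := e (pi a).
Definition transport_antipode a := pinv (S (pi a)).

Lemma big_transport_comul (F : A * A -> k) a :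
  \sum_(p <- transport_comul a) F p = \sum_(p <- D (pi a)) F (pinv p.1, pinv p.2).
Proof. exact: big_map. Qed.

Lemma transport_antipode_l x :
  \sum_(p <- transport_comul x) transport_antipode p.1 * p.2 = (transport_counit x)%:A.
Proof.
have lpinv := is_linear_pinv; rewrite big_map.
transitivity (pinv (\sum_(p <- D (pi x)) S p.1 * p.2)).
  by rewrite (is_linear_sum _ _ lpinv); apply: eq_bigr => p _; rewrite /transport_antipode /= pinvK pinvM.
by rewrite (S_antipode_l (hopf_ax hB)) (is_linearZ _ _ lpinv) pinv1.
Qed.

Lemma transport_antipode_r x :
  \sum_(p <- transport_comul x) p.1 * transport_antipode p.2 = (transport_counit x)%:A.
Proof.
have lpinv := is_linear_pinv; rewrite big_map.
transitivity (pinv (\sum_(p <- D (pi x)) p.1 * S p.2)).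
  by rewrite (is_linear_sum _ _ lpinv); apply: eq_bigr => p _; rewrite /transport_antipode /= pinvK pinvM.
by rewrite (S_antipode_r (hopf_ax hB)) (is_linearZ _ _ lpinv) pinv1.
Qed.

Lemma transport_hopf_axioms :
  hopf_axioms transport_comul transport_counit transport_antipode.
Proof.
have lpinv := is_linear_pinv; have le := linear_form_counit hB.
have lS := is_linear_antipode hB; have pinv_sum := is_linear_sum _ _ lpinv.
split.
- move=> a x y; apply: teq2I => F lF; rewrite big_cat !big_map lpi.
  rewrite (linear_form_tensor (is_tensor_linear_comul hB)
             (F := fun p => F (pinv p.1, pinv p.2))); last by solve_linear_form.
  congr (_ + _); rewrite mulr_sumr; apply: eq_bigr => p _ /=.
  by rewrite (linear_formZ _ _ (lF.1 _)).
- by move=> a x y; rewrite /transport_counit lpi le.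
- by move=> a x y; rewrite /transport_antipode lpi lS lpinv.
- move=> x G lG; rewrite !big_sbind !big_map.
  transitivity (\sum_(p <- D (pi x)) \sum_(q <- D p.1) G (pinv q.1) (pinv q.2) (pinv p.2)).
    by apply: eq_bigr => p _; rewrite big_map /= big_transport_comul pinvK.
  rewrite (big_coassoc hB (G := fun a b c => G (pinv a) (pinv b) (pinv c)));
    last by solve_linear_form.
  by apply: eq_bigr => p _; rewrite big_map /= big_transport_comul pinvK.
- move=> x; rewrite big_map -{2}(piK x) -[in RHS](e_counit_l (hopf_ax hB) (pi x)) pinv_sum.
  by apply: eq_bigr => p _; rewrite /transport_counit /= pinvK (is_linearZ _ _ lpinv).
- move=> x; rewrite big_map -{2}(piK x) -[in RHS](e_counit_r (hopf_ax hB) (pi x)) pinv_sum.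
  by apply: eq_bigr => p _; rewrite /transport_counit /= pinvK (is_linearZ _ _ lpinv).
- move=> x y; apply: teq2I => F lF; rewrite big_transport_comul piM.
  rewrite (big_comulM hB (F := fun p => F (pinv p.1, pinv p.2))); last by solve_linear_form.
  rewrite big_sbind !big_map; apply: eq_bigr => p _; rewrite big_map big_transport_comul.
  by apply: eq_bigr => q _; rewrite /= !pinvM.
- apply: teq2I => F lF; rewrite big_transport_comul pi1.
  rewrite (big_comul1 hB (F := fun p => F (pinv p.1, pinv p.2))); last by solve_linear_form.
  by rewrite big_seq1 /= pinv1.
- by move=> x y; rewrite /transport_counit piM counitM.
- by rewrite /transport_counit pi1 counit1.
- exact: transport_antipode_l.
- exact: transport_antipode_r.
Qed.

Definition transport_hopf : hopf_struct A := HopfStruct transport_hopf_axioms.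

Lemma hopf_map_transport : hopf_map transport_hopf hB pi.
Proof.
split=> // x; apply: teq2I => F lF.
by rewrite big_map big_transport_comul -big_pair; apply: eq_bigr => p _; rewrite /= !pinvK.
Qed.

Lemma hopf_map_transport_inv : hopf_map hB transport_hopf pinv.
Proof.
split.
- exact: is_linear_pinv.
- exact: pinv1.
- exact: pinvM.
- by move=> y; rewrite /= /transport_comul pinvK.
- by move=> y; rewrite /= /transport_counit pinvK.
Qed.

End Transport.

Section CocycleBrace.
Variables (k : fieldType) (A : algType k) (h : hopf_struct A) (H : hopfAlg k).
Variables (rho : A -> seq (H * A)) (pi : A -> H) (pinv : H -> A).
Hypothesis rho_comod : comod_coalg h rho.
Hypothesis pi_cocycle : forall x, teq2 (comul (hstruct H) (pi x))
  (sbind (comul h x) (fun p => [seq (pi p.1 * u.1, pi u.2) | u <- rho p.2])).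
Hypotheses (lpi : is_linear pi) (pi1 : pi 1 = 1) (piM : forall x y, pi (x * y) = pi x * pi y).
Hypotheses (piK : cancel pi pinv) (pinvK : cancel pinv pi).
Local Notation D := (comul h).
Local Notation S := (antipode h).
Local Notation h' := (transport_hopf (hstruct H) lpi pi1 piM piK pinvK).

Lemma is_tensor_linear_coaction : is_tensor_linear rho.
Proof. by case: rho_comod. Qed.

Lemma big_comod_coalg (G : H -> A -> A -> k) y : trilinear_form G ->
  \sum_(w <- rho y) \sum_(q <- D w.2) G w.1 q.1 q.2 =
  \sum_(m <- D y) \sum_(u <- rho m.1) \sum_(v <- rho m.2) G (u.1 * v.1) u.2 v.2.
Proof.
case: rho_comod => _ _ _ comod_comul _ lG; have := comod_comul y G lG.
rewrite !big_sbind; under eq_bigr do rewrite big_map.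
by move=> ->; apply: eq_bigr => m _; rewrite big_sbind; under eq_bigr do rewrite big_map.
Qed.

Lemma big_transport_cocycle (F : A * A -> k) a : pair_bilinear F ->
  \sum_(s <- comul h' a) F s = \sum_(p <- D a) \sum_(u <- rho p.2) F (p.1 * pinv u.1, u.2).
Proof.
move=> lF; have lpinv := is_linear_pinv lpi piK pinvK.
rewrite /= big_transport_comul (teq2E (pi_cocycle a) (F := fun p => F (pinv p.1, pinv p.2)));
  last by solve_linear_form.
rewrite big_sbind; apply: eq_bigr => p _; rewrite big_map.
by apply: eq_bigr => u _; rewrite /= (pinvM piM piK pinvK) !piK.
Qed.

Lemma big_brace_coaction_transport (F : A * A -> k) x : pair_bilinear F ->
  \sum_(w <- brace_coaction h h' x) F w = \sum_(v <- rho x) F (pinv v.1, v.2).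
Proof.
move=> lF; have lpinv := is_linear_pinv lpi piK pinvK; have lS := is_linear_antipode h.
have lrho := is_tensor_linear_coaction.
rewrite big_brace_coaction.
transitivity (\sum_(p <- D x) \sum_(q <- D p.2) \sum_(v <- rho q.2)
                F (S p.1 * q.1 * pinv v.1, v.2)).
  apply: eq_bigr => p _.
  rewrite (big_transport_cocycle (F := fun u => F (S p.1 * u.1, u.2))); last by solve_linear_form.
  by do 2!(apply: eq_bigr => ? _); rewrite mulrA.
rewrite (big_antipode_cancel_l h (F := fun w => \sum_(v <- rho w.2) F (w.1 * pinv v.1, v.2)));
  last by solve_linear_form.
by apply: eq_bigr => v _; rewrite mul1r.
Qed.

Lemma transport_brace_compat : brace_compat h h'.
Proof.
have lpinv := is_linear_pinv lpi piK pinvK; have lrho := is_tensor_linear_coaction.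
have pinvM' := pinvM piM piK pinvK.
apply/brace_compatP => x G lG.
transitivity (\sum_(p <- D x) \sum_(r <- D p.2) \sum_(u <- rho r.1) \sum_(v <- rho r.2)
                G (p.1 * pinv u.1 * pinv v.1) u.2 v.2).
  rewrite (big_transport_cocycle (F := fun s => \sum_(q <- D s.2) G s.1 q.1 q.2));
    last by solve_linear_form.
  apply: eq_bigr => p _.
  rewrite (big_comod_coalg (G := fun a b c => G (p.1 * pinv a) b c)); last by solve_linear_form.
  by do 3!(apply: eq_bigr => ? _); rewrite pinvM' mulrA.
rewrite -(big_coassoc h (G := fun a1 a2 a3 => \sum_(u <- rho a2) \sum_(v <- rho a3)
            G (a1 * pinv u.1 * pinv v.1) u.2 v.2)); last by solve_linear_form.
apply: eq_bigr => p _.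
rewrite (big_transport_cocycle (F := fun s => \sum_(w <- brace_coaction h h' p.2)
            G (s.1 * w.1) s.2 w.2)); last by solve_linear_form.
apply: eq_bigr => m _; apply: eq_bigr => u _.
by rewrite (big_brace_coaction_transport (F := fun w => G (m.1 * pinv u.1 * w.1) u.2 w.2));
  last by solve_linear_form.
Qed.

End CocycleBrace.

Definition bij_inv (T U : Type) (f : T -> U) (f_bij : bijective f) : U -> T :=
  proj1_sig (constructive_indefinite_description _
    (let: Bijective g fK gK := f_bij in
     ex_intro (fun g => cancel f g /\ cancel g f) g (conj fK gK))).

Lemma bij_invK (T U : Type) (f : T -> U) (f_bij : bijective f) : cancel f (bij_inv f_bij).
Proof. by rewrite /bij_inv; case: constructive_indefinite_description => g []. Qed.

Lemma bij_invKV (T U : Type) (f : T -> U) (f_bij : bijective f) : cancel (bij_inv f_bij) f.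
Proof. by rewrite /bij_inv; case: constructive_indefinite_description => g []. Qed.

Section Equivalence.
Variables (k : fieldType) (A : algType k) (h : hopf_struct A).
Local Notation D := (comul h).
Local Notation S := (antipode h).

Lemma comod_coalg_brace_coaction (B : hopf_brace_on h) :
  comod_coalg (H := HopfAlg (hb_second B)) h (brace_coaction h (hb_second B)).
Proof.
have hC := hb_compat B; split.
- exact: is_tensor_linear_brace_coaction.
- exact: brace_coaction_coassoc.
- exact: brace_coaction_counit.
- exact: brace_coaction_comul.
- exact: brace_coaction_counit_coalg.
Qed.

Lemma bij_cocycle_id (B : hopf_brace_on h) :
  bij_cocycle (H := HopfAlg (hb_second B)) h (brace_coaction h (hb_second B)) id.
Proof. by split=> //; [exists id | exact: comul_coaction]. Qed.

Definition cocycle_of_brace (B : hopf_brace_on h) : cocycle_on h :=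
  CocycleOn (comod_coalg_brace_coaction B) (bij_cocycle_id B).

Lemma brace_coaction_hom (h1 h2 : hopf_struct A) (f : A -> A) x :
  hopf_map h h f -> hopf_map h1 h2 f ->
  teq2 (brace_coaction h h2 (f x)) [seq (f p.1, f p.2) | p <- brace_coaction h h1 x].
Proof.
move=> hf hf'; have lS := is_linear_antipode h; case: (hf) => lf _ fM _ _.
apply: teq2I => F lF; rewrite big_map (big_brace_coaction _ _ (fun w => F (f w.1, f w.2))).
rewrite big_brace_coaction.
rewrite (big_hopf_map_comul (F := fun p => \sum_(u <- comul h2 p.2) F (S p.1 * u.1, u.2)) _ hf);
  last by solve_linear_form.
transitivity (\sum_(p <- D x) \sum_(u <- comul h1 p.2) F (S (f p.1) * f u.1, f u.2)).
  apply: eq_bigr => p _.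
  by rewrite (big_hopf_map_comul (F := fun u => F (S (f p.1) * u.1, u.2)) _ hf');
    last by solve_linear_form.
rewrite (big_hopf_map_antipode
           (F := fun q => \sum_(u <- comul h1 q.2) F (q.1 * f u.1, f u.2)) _ hf);
  last by solve_linear_form.
by apply: eq_bigr => p _; apply: eq_bigr => u _; rewrite /= fM.
Qed.

Lemma cocycle_of_brace_hom_prop (B1 B2 : hopf_brace_on h) (f : cb_hom B1 B2) :
  cc_hom_prop (E := cocycle_of_brace B1) (P := cocycle_of_brace B2) (proj1_sig f, proj1_sig f).
Proof. by case: f => f [hf hf'] /=; split=> // x; apply: brace_coaction_hom. Qed.

Definition brace_to_cocycle : functor (CB h) (CC h).
Proof.
refine (@Functor (CB h) (CC h) cocycle_of_brace
          (fun B1 B2 f => exist _ _ (cocycle_of_brace_hom_prop f)) _ _).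
- by move=> B; apply: sig_eq_val.
- by move=> B1 B2 B3 f g; apply: sig_eq_val.
Defined.

Section CocycleOn.
Variable E : cocycle_on h.

Lemma is_linear_cc_pi : is_linear (cc_pi E).
Proof. by case: (cc_cocycle E). Qed.

Lemma cc_pi1 : cc_pi E 1 = 1.
Proof. by case: (cc_cocycle E). Qed.

Lemma cc_piM x y : cc_pi E (x * y) = cc_pi E x * cc_pi E y.
Proof. by case: (cc_cocycle E). Qed.

Lemma bijective_cc_pi : bijective (cc_pi E).
Proof. by case: (cc_cocycle E). Qed.

Lemma cc_pi_cocycle x : teq2 (comul (hstruct (cc_H E)) (cc_pi E x))
  (sbind (D x) (fun p => [seq (cc_pi E p.1 * u.1, cc_pi E u.2) | u <- cc_rho E p.2])).
Proof. by case: (cc_cocycle E). Qed.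

End CocycleOn.

Definition cc_pinv (E : cocycle_on h) : cc_H E -> A := bij_inv (bijective_cc_pi E).
Arguments cc_pinv : clear implicits.

Definition cocycle_hopf (E : cocycle_on h) : hopf_struct A :=
  transport_hopf (hstruct (cc_H E)) (is_linear_cc_pi E) (cc_pi1 E) (@cc_piM E)
    (bij_invK (bijective_cc_pi E)) (bij_invKV (bijective_cc_pi E)).

Definition brace_of_cocycle (E : cocycle_on h) : hopf_brace_on h :=
  HopfBraceOn (transport_brace_compat (cc_comod E) (@cc_pi_cocycle E) (is_linear_cc_pi E)
    (cc_pi1 E) (@cc_piM E) (bij_invK (bijective_cc_pi E)) (bij_invKV (bijective_cc_pi E))).

Lemma big_brace_of_cocycle_coaction (E : cocycle_on h) (F : A * A -> k) x : pair_bilinear F ->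
  \sum_(w <- brace_coaction h (cocycle_hopf E) x) F w =
  \sum_(v <- cc_rho E x) F (cc_pinv E v.1, v.2).
Proof. exact: (big_brace_coaction_transport (cc_comod E) (@cc_pi_cocycle E)). Qed.

Lemma brace_of_cocycle_hom (E P : cocycle_on h) (fg : cc_hom E P) :
  hb_hom_prop (brace_of_cocycle E) (brace_of_cocycle P) (proj1_sig fg).2.
Proof.
case: fg => [[f g] []] /= hf hg pi_fg _; split=> //.
have cc_pinv_fg y : cc_pinv P (f y) = g (cc_pinv E y).
  by rewrite /cc_pinv -{1}(bij_invKV (bijective_cc_pi E) y) -pi_fg bij_invK.
have lpinv := is_linear_pinv (is_linear_cc_pi P) (bij_invK (bijective_cc_pi P))
                (bij_invKV (bijective_cc_pi P)).
case: (hg) => lg g1 gM _ _; split=> // x.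
- apply: teq2I => F lF.
  rewrite /= big_transport_comul pi_fg.
  rewrite (big_hopf_map_comul (F := fun p => F (cc_pinv P p.1, cc_pinv P p.2)) _ hf);
    last by solve_linear_form.
  by rewrite big_map big_transport_comul; apply: eq_bigr => p _; rewrite /= !cc_pinv_fg.
- by rewrite /= /transport_counit pi_fg; case: hf => _ _ _ _ ->.
Qed.

Definition cocycle_to_brace : functor (CC h) (CB h).
Proof.
refine (@Functor (CC h) (CB h) brace_of_cocycle
          (fun E P fg => exist _ _ (brace_of_cocycle_hom fg)) _ _).
- by move=> E; apply: sig_eq_val.
- by move=> E1 E2 E3 f g; apply: sig_eq_val.
Defined.

Lemma bij_inv_cocycle_of_brace (B : hopf_brace_on h) y :
  bij_inv (bijective_cc_pi (cocycle_of_brace B)) y = y.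
Proof. exact: (bij_invKV (bijective_cc_pi (cocycle_of_brace B)) y). Qed.

Lemma hb_hom_id_of_cocycle_of_brace (B : hopf_brace_on h) :
  hb_hom_prop (brace_of_cocycle (cocycle_of_brace B)) B id /\
  hb_hom_prop B (brace_of_cocycle (cocycle_of_brace B)) id.
Proof.
split; (split; first exact: hopf_map_id); split=> // x; apply: teq2I => F lF;
  rewrite big_map /=.
- rewrite big_pair big_transport_comul -big_pair.
  by apply: eq_bigr => p _; rewrite !bij_inv_cocycle_of_brace.
- by rewrite big_map; apply: eq_bigr => p _; rewrite !bij_inv_cocycle_of_brace.
Qed.

Lemma brace_roundtrip :
  nat_iso (comp_functor cocycle_to_brace brace_to_cocycle) (id_functor (CB h)).
Proof.
exists (fun B => exist _ _ (proj1 (hb_hom_id_of_cocycle_of_brace B))); split.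
- move=> B; exists (exist _ _ (proj2 (hb_hom_id_of_cocycle_of_brace B))).
  by split; apply: sig_eq_val.
- by move=> B1 B2 f; apply: sig_eq_val.
Qed.

Lemma cc_hom_cc_pi (E : cocycle_on h) :
  cc_hom_prop (E := cocycle_of_brace (brace_of_cocycle E)) (P := E) (cc_pi E, id).
Proof.
split=> //=; first exact: hopf_map_transport.
- exact: hopf_map_id.
- move=> x; apply: teq2I => F lF; have lpi := is_linear_cc_pi E.
  rewrite big_map (big_brace_of_cocycle_coaction E (F := fun w => F (cc_pi E w.1, w.2)));
    last by solve_linear_form.
  by rewrite -big_pair; apply: eq_bigr => v _; rewrite /cc_pinv bij_invKV.
Qed.

Lemma cc_hom_cc_pinv (E : cocycle_on h) :
  cc_hom_prop (E := E) (P := cocycle_of_brace (brace_of_cocycle E)) (cc_pinv E, id).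
Proof.
have lpinv := is_linear_pinv (is_linear_cc_pi E) (bij_invK (bijective_cc_pi E))
                (bij_invKV (bijective_cc_pi E)).
split=> //=; first exact: hopf_map_transport_inv.
- exact: hopf_map_id.
- by move=> x; rewrite /cc_pinv bij_invK.
- move=> x; apply: teq2I => F lF.
  by rewrite big_map big_brace_of_cocycle_coaction.
Qed.

Lemma cocycle_roundtrip :
  nat_iso (comp_functor brace_to_cocycle cocycle_to_brace) (id_functor (CC h)).
Proof.
exists (fun E => exist _ _ (cc_hom_cc_pi E)); split.
- move=> E; exists (exist _ _ (cc_hom_cc_pinv E)).
  split; apply: sig_eq_val; congr pair; apply: functional_extensionality.
  + exact: bij_invK.
  + exact: bij_invKV.
- move=> E P [[f g] [hf hg pi_fg rho_fg]]; apply: sig_eq_val => /=; congr pair.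
  exact: functional_extensionality.
Qed.

End Equivalence.

Arguments cc_pinv {k A h} E.

Theorem theorem2p12 (k : fieldType) (A : algType k) (h : hopf_struct A) :
  cat_equivalent (CB h) (CC h).
Proof.
exists (brace_to_cocycle h), (cocycle_to_brace h).
split; [exact: brace_roundtrip | exact: cocycle_roundtrip].
Qed.
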